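(* Let $X$ and $Z$ be real Banach spaces and $Y$ a closed subspace of $Z$ which has property-$(SU)$ in $Z$. Identify $(X\widehat{\otimes}_\pi Y)^*$ with $\mathcal{L}(X,Y^* )$ and $(X\widehat{\otimes}_\pi Z)^*$ with $\mathcal{L}(X,Z^* )$. Then every isometry $S\in\mathcal{L}(X,Y^* )$ has a unique norm-preserving extension to $X\widehat{\otimes}_\pi Z$, i.e. there is exactly one $T\in\mathcal{L}(X,Z^* )$ with $\|T\|=\|S\|$ and $(Tx)|_Y=Sx$ for all $x\in X$.
   Context: $X\widehat{\otimes}_\pi Y$ denotes the completed projective tensor product; its dual is identified with the space $\mathcal{L}(X,Y^* )$ of bounded linear operators via $S(x\otimes y)=(Sx)(y)$. Since $Y$ is an ideal in $Z$ (see below), $X\widehat{\otimes}_\pi Y$ is isometrically a subspace of $X\widehat{\otimes}_\pi Z$. $Y^\perp=\{z^*\in Z^*:z^*|_Y=0\}$. $Y$ has property-$(SU)$ in $Z$ if there is a bounded linear projection $P$ on $Z^*$ with range $Y^\perp$ such that, with $G=(I-P)(Z^* )$, for every $z^*=y^\#+y^\perp$ with $y^\#\in G$, $0\neq y^\perp\in Y^\perp$, one has $\|z^*\|>\|y^\#\|$; equivalently, every $y^*\in Y^*$ has a unique norm-preserving extension to $Z$ and there is a norm-one projection on $Z^*$ with kernel $Y^\perp$ (i.e. $Y$ is an ideal in $Z$). *)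

From HB Require Import structures.
From mathcomp Require Import all_boot all_order all_algebra.
From mathcomp Require Import all_classical all_reals all_analysis.
Set Implicit Arguments. Unset Strict Implicit. Unset Printing Implicit Defensive.
Import Order.TTheory GRing.Theory Num.Theory.
Import numFieldNormedType.Exports.
Local Open Scope classical_set_scope.
Local Open Scope ring_scope.

Section Defs.
Variable R : realType.

Definition lin_subspace (Z : normedModType R) (Y : set Z) : Prop :=
  Y 0 /\ forall (a : R) y1 y2, Y y1 -> Y y2 -> Y (a *: y1 + y2).

(* A functional on the subspace Y, represented by f : Z -> R (values off Y
   are irrelevant); "f is a bounded linear functional on Y", i.e. f|_Y \in Y^* *)
Definition is_dual_on (Z : normedModType R) (Y : set Z) (f : Z -> R) : Prop :=
  (forall (a : R) y1 y2, Y y1 -> Y y2 -> f (a *: y1 + y2) = a * f y1 + f y2) /\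
  exists C : R, forall y, Y y -> `|f y| <= C * `|y|.

Definition dual_norm (Z : normedModType R) (Y : set Z) (f : Z -> R) : R :=
  sup [set `|f y| | y in [set y | Y y /\ `|y| <= 1]].

Definition is_op_to_dual (X Z : normedModType R) (Y : set Z) (S : X -> Z -> R)
  : Prop :=
  (forall x, is_dual_on Y (S x)) /\
  (forall (a : R) x1 x2 y, Y y -> S (a *: x1 + x2) y = a * S x1 y + S x2 y) /\
  exists C : R, forall x, dual_norm Y (S x) <= C * `|x|.

Definition op_norm (X Z : normedModType R) (Y : set Z) (S : X -> Z -> R) : R :=
  sup [set dual_norm Y (S x) | x in [set x : X | `|x| <= 1]].

Definition dual_isometry (X Z : normedModType R) (Y : set Z) (S : X -> Z -> R)
  : Prop := forall x, dual_norm Y (S x) = `|x|.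

Definition in_dual (Z : normedModType R) (f : Z -> R) : Prop := is_dual_on setT f.

Definition annihilator (Z : normedModType R) (Y : set Z) (f : Z -> R) : Prop :=
  in_dual f /\ forall y, Y y -> f y = 0.

(* property-(SU): there is a bounded linear projection P on Z^* with range
   Y^perp such that, for z^* = y^# + y^perp with y^# in (I-P)(Z^* ) and
   0 <> y^perp in Y^perp, ||z^*|| > ||y^#||.  Since the decomposition is
   unique (y^perp = P z^*, y^# = z^* - P z^* ), this is stated for z^*. *)
Definition property_SU (Z : normedModType R) (Y : set Z) : Prop :=
  exists P : (Z -> R) -> (Z -> R),
    [/\ (forall f, in_dual f -> in_dual (P f)) /\
        (forall (a : R) f g, in_dual f -> in_dual g ->
            P (fun z => a * f z + g z) = (fun z => a * P f z + P g z)),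
        (exists C : R, forall f, in_dual f -> dual_norm setT (P f) <= C * dual_norm setT f),
        (forall f, in_dual f -> annihilator Y (P f)),
        (forall f, annihilator Y f -> P f = f) &
        (forall f, in_dual f -> P f <> (fun _ => 0) ->
            dual_norm setT (fun z => f z - P f z) < dual_norm setT f)].

End Defs.

From HB Require Import structures.
From mathcomp Require Import all_boot all_order all_algebra.
From mathcomp Require Import all_classical all_reals all_analysis.
From mathcomp Require Import ring lra.
Set Implicit Arguments. Unset Strict Implicit.
Import Order.TTheory GRing.Theory Num.Theory.
Import numFieldNormedType.Exports.
Local Open Scope classical_set_scope.
Local Open Scope ring_scope.

(* For each x, Hahn-Banach extends the functional S x on Y to a functional
   T x on Z of the same norm |x|.  Property-(SU) forces P g = 0 for every
   norm-preserving extension g (g - P g has the same norm on Y but, unless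
   P g = 0, a strictly smaller one on Z), and two extensions killed by P
   differ by an element of Y^perp fixed by P, hence coincide.  This makes
   x |-> T x linear.  Any other extension T' of norm |S| <= 1 satisfies
   |T' x| <= |x|, so each T' x is norm-preserving and equals T x. *)

Section HahnBanach.
Variables (R : realType) (V : lmodType R) (p : V -> R).

(* Hahn-Banach is Zorn's lemma applied to graphs [G : set (V * R)] of linear
   functionals defined on a subspace and bounded above by [p]. *)
Definition dominated_graph (G : set (V * R)) : Prop :=
  [/\ (forall u v, G u -> G v -> u.1 = v.1 -> u.2 = v.2),
      (forall t u v, G u -> G v -> G (t *: u.1 + v.1, t * u.2 + v.2)) &
      (forall u, G u -> u.2 <= p u.1)].

Lemma dominated_graph_pairwise (G : set (V * R)) :
  (forall u v, G u -> G v ->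
     exists H, [/\ dominated_graph H, H `<=` G, H u & H v]) ->
  dominated_graph G.
Proof.
move=> loc; split.
- by move=> u v Gu Gv; have [H [[fH _ _] _ Hu Hv]] := loc u v Gu Gv; exact: fH.
- move=> t u v Gu Gv; have [H [[_ cH _] HG Hu Hv]] := loc u v Gu Gv.
  exact/HG/cH.
- by move=> u Gu; have [H [[_ _ dH] _ Hu _]] := loc u u Gu Gu; exact: dH.
Qed.

Lemma dominated_graph_chain (G0 : set (V * R)) (F : set (set (V * R))) :
  dominated_graph G0 -> F `<=` (fun X => dominated_graph (X `|` G0)) ->
  total_on F subset -> dominated_graph (\bigcup_(X in F) X `|` G0).
Proof.
move=> domG0 domF chainF; apply: dominated_graph_pairwise => u v.
pose F0 := F `|` [set set0].
have inF0 w : (\bigcup_(X in F) X `|` G0) w -> exists2 X, F0 X & (X `|` G0) w.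
  case=> [[X FX Xw]|G0w]; first by exists X; [left | left].
  by exists set0; [right | right].
have F0_dom X : F0 X ->
    dominated_graph (X `|` G0) /\ X `|` G0 `<=` \bigcup_(X in F) X `|` G0.
  case=> [FX|->]; last by rewrite set0U; split => // w G0w; right.
  by split; [exact: domF | move=> w [Xw|G0w]; [left; exists X | right]].
move=> /inF0[X1 F0X1 X1u] /inF0[X2 F0X2 X2v].
have [X [F0X X1X X2X]] : exists X, [/\ F0 X, X1 `<=` X & X2 `<=` X].
  case: F0X1 => [FX1|->]; last by exists X2; split => // ? [].
  case: F0X2 => [FX2|->]; last by exists X1; split=> [|//|? []]; left.
  by have [?|?] := chainF _ _ FX1 FX2;
    [exists X2 | exists X1]; split => //; left.
have [domX subX] := F0_dom X F0X.
exists (X `|` G0); split => //.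
  by case: X1u => [/X1X ?|?]; [left | right].
by case: X2v => [/X2X ?|?]; [left | right].
Qed.

Hypotheses (p_add : forall u v, p (u + v) <= p u + p v)
           (p_hom : forall t u, 0 < t -> p (t *: u) = t * p u).

Section Adjoin.
Variables (G : set (V * R)) (z : V).
Hypotheses (domG : dominated_graph G) (G00 : G (0, 0)).

Definition graph_adjoin (c : R) : set (V * R) :=
  [set w | exists u t, G u /\ w = (u.1 + t *: z, u.2 + t * c)].

Lemma adjoin_bound : exists c,
  (forall u, G u -> u.2 - p (u.1 - z) <= c) /\
  (forall v, G v -> c <= p (v.1 + z) - v.2).
Proof.
have [_ closG domGp] := domG.
pose E := [set u.2 - p (u.1 - z) | u in G].
have E_ub v : G v -> ubound E (p (v.1 + z) - v.2).
  move=> Gv _ [u Gu <-].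
  have := domGp _ (closG 1 _ _ Gu Gv); rewrite /= scale1r mul1r => uv_le.
  have := p_add (u.1 - z) (v.1 + z).
  rewrite addrACA addNr addr0; lra.
exists (sup E); split.
- move=> u Gu; apply: ub_le_sup; last by exists u.
  by exists (p ((0 : V) + z) - 0); exact: (E_ub (0, 0)).
- by move=> v Gv; apply: ge_sup; [exists (0 - p (0 - z)), (0, 0) | exact: E_ub].
Qed.

Lemma graph_adjoin_sub c : G `<=` graph_adjoin c.
Proof. by move=> [u a] Gu; exists (u, a), 0; rewrite scale0r mul0r !addr0. Qed.

Lemma graph_adjoin_new c : graph_adjoin c (z, c).
Proof. by exists (0, 0), 1; rewrite scale1r mul1r !add0r. Qed.

Lemma graph_adjoin_dominated c :
  (forall u, G u -> u.2 - p (u.1 - z) <= c) ->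
  (forall v, G v -> c <= p (v.1 + z) - v.2) ->
  forall w, graph_adjoin c w -> w.2 <= p w.1.
Proof.
have [_ closG domGp] := domG.
move=> c_ge c_le _ [u [t [Gu ->]]] /=.
have [tneg|tpos|->] := ltgtP t 0; last first.
- by rewrite scale0r mul0r !addr0; exact: domGp.
- have := c_le _ (closG t^-1 _ _ Gu G00); rewrite /= !addr0 => le_c.
  have -> : p (u.1 + t *: z) = t * p (t^-1 *: u.1 + z).
    by rewrite -p_hom // scalerDr scalerA mulfV ?gt_eqF // scale1r.
  have := ler_wpM2l (ltW tpos) le_c.
  rewrite mulrBr mulrA mulfV ?gt_eqF // mul1r; lra.
- have ntpos : 0 < - t by rewrite oppr_gt0.
  have := c_ge _ (closG (- t)^-1 _ _ Gu G00); rewrite /= !addr0 => ge_c.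
  have -> : p (u.1 + t *: z) = - t * p ((- t)^-1 *: u.1 - z).
    rewrite -p_hom // scalerBr scalerA mulfV ?gt_eqF // scale1r.
    by rewrite scaleNr opprK.
  have := ler_wpM2l (ltW ntpos) ge_c.
  rewrite mulrBr mulrA mulfV ?gt_eqF // mul1r; lra.
Qed.

Lemma dominated_graph_adjoin c : (forall a, ~ G (z, a)) ->
  (forall u, G u -> u.2 - p (u.1 - z) <= c) ->
  (forall v, G v -> c <= p (v.1 + z) - v.2) ->
  dominated_graph (graph_adjoin c).
Proof.
have [funG closG _] := domG.
move=> z_new c_ge c_le; split; last exact: graph_adjoin_dominated.
- move=> _ _ [u1 [t1 [Gu1 ->]]] [u2 [t2 [Gu2 ->]]] /=.
  have [<- e|t12 e] := eqVneq t1 t2.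
    by rewrite (funG _ _ Gu1 Gu2 (addIr _ e)).
  (* if [t1 != t2], [z] would lie in the domain of [G] *)
  have := closG (t1 - t2)^-1 _ _ (closG (-1) _ _ Gu1 Gu2) G00 => /=.
  suff -> : (t1 - t2)^-1 *: (-1 *: u1.1 + u2.1) + 0 = z by move/z_new.
  have -> : -1 *: u1.1 + u2.1 = (t1 - t2) *: z.
    rewrite scaleN1r scalerBl.
    have -> : u2.1 = u1.1 + t1 *: z - t2 *: z by rewrite e addrK.
    by rewrite -addrA addKr.
  by rewrite addr0 scalerA mulVf ?scale1r // subr_eq0.
- move=> t _ _ [u1 [t1 [Gu1 ->]]] [u2 [t2 [Gu2 ->]]] /=.
  exists (t *: u1.1 + u2.1, t * u1.2 + u2.2), (t * t1 + t2).
  split; first exact: closG.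
  congr pair => /=; last by ring.
  by rewrite scalerDr scalerDl scalerA addrACA.
Qed.

End Adjoin.

Lemma hahn_banach (Y : set V) (f : V -> R) :
  Y 0 -> (forall a y1 y2, Y y1 -> Y y2 -> Y (a *: y1 + y2)) ->
  (forall a y1 y2, Y y1 -> Y y2 -> f (a *: y1 + y2) = a * f y1 + f y2) ->
  (forall y, Y y -> f y <= p y) ->
  exists g : V -> R, [/\ (forall a u v, g (a *: u + v) = a * g u + g v),
     (forall y, Y y -> g y = f y) & (forall u, g u <= p u)].
Proof.
move=> Y0 Ylin flin f_le.
pose G0 := [set u : V * R | Y u.1 /\ u.2 = f u.1].
have f0 : f 0 = 0.
  by have := flin (-1) 0 0 Y0 Y0; rewrite scaleN1r oppr0 addr0 mulN1r addNr.
have domG0 : dominated_graph G0.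
  split.
  - by move=> [u a] [v b]; rewrite /G0 /= => -[_ ->] [_ ->] ->.
  - move=> t [u a] [v b]; rewrite /G0 /= => -[Yu ->] [Yv ->].
    by split; [exact: Ylin | rewrite flin].
  - by move=> [u a]; rewrite /G0 /= => -[Yu ->]; exact: f_le.
have [A [domA maxA]] := Zorn_bigcup (fun F => dominated_graph_chain domG0).
set G := A `|` G0 in domA maxA.
have G00 : G (0, 0) by right; split; rewrite //= f0.
have G_total z : exists a, G (z, a).
  apply: contrapT => z_new.
  have {}z_new a : ~ G (z, a) by move=> Gza; apply: z_new; exists a.
  have [c [c_ge c_le]] := adjoin_bound z domA G00.
  have G_adj := @graph_adjoin_sub G z c.
  apply: (maxA (graph_adjoin G z c)).
    split; first by move=> w Aw; apply: G_adj; left.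
    by move=> /(_ _ (graph_adjoin_new z G00 c)) Azc; apply: (z_new c); left.
  have -> : graph_adjoin G z c `|` G0 = graph_adjoin G z c.
    by apply/setUidPl => w G0w; apply: G_adj; right.
  exact: dominated_graph_adjoin.
have [funG closG domGp] := domA.
have [g Gg] := choice G_total.
exists g; split.
- by move=> a u v; exact: (funG _ _ (Gg _) (closG a _ _ (Gg u) (Gg v))).
- by move=> y Yy; apply: (funG (y, g y) (y, f y)) => //; right.
- by move=> u; exact: (domGp _ (Gg u)).
Qed.

End HahnBanach.

Section DualNorm.
Variables (R : realType) (Z : normedModType R).
Implicit Types (Y : set Z) (f g : Z -> R).

Lemma dual_on0 Y f : Y 0 -> is_dual_on Y f -> f 0 = 0.
Proof.
move=> Y0 [flin _].
by have := flin (-1) 0 0 Y0 Y0; rewrite scaleN1r oppr0 addr0 mulN1r addNr.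
Qed.

Lemma in_dual_comb f g (a : R) :
  in_dual f -> in_dual g -> in_dual (fun z => a * f z + g z).
Proof.
move=> [flin [Cf f_le]] [glin [Cg g_le]]; split.
  by move=> b y1 y2 _ _; rewrite flin // glin //; ring.
exists (`|a| * Cf + Cg) => z _.
have af_le : `|a * f z| <= `|a| * Cf * `|z|.
  by rewrite normrM -mulrA; apply: ler_wpM2l => //; exact: f_le.
have := g_le z I; have := ler_normD (a * f z) (g z).
rewrite mulrDl; lra.
Qed.

Lemma dual_norm_ub Y f y :
  is_dual_on Y f -> Y y -> `|y| <= 1 -> `|f y| <= dual_norm Y f.
Proof.
move=> [_ [C f_le]] Yy y_le1; apply: ub_le_sup; last by exists y.
exists `|C| => _ [z [Yz z_le1] <-].
apply: (le_trans (f_le z Yz)); apply: (@le_trans _ _ (`|C| * `|z|)).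
  by apply: ler_wpM2r => //; exact: ler_norm.
by rewrite -[leRHS]mulr1; apply: ler_wpM2l.
Qed.

Lemma dual_norm_le Y f M :
  Y 0 -> (forall y, Y y -> `|y| <= 1 -> `|f y| <= M) -> dual_norm Y f <= M.
Proof.
move=> Y0 f_le; apply: ge_sup.
  by exists `|f 0|, 0 => //; split; rewrite ?normr0 ?ler01.
by move=> _ [y [Yy y_le1] <-]; exact: f_le.
Qed.

Lemma dual_norm_ge0 Y f : Y 0 -> is_dual_on Y f -> 0 <= dual_norm Y f.
Proof.
by move=> Y0 fY; apply: le_trans (dual_norm_ub fY Y0 _); rewrite ?normr0 ?ler01.
Qed.

Lemma eq_dual_norm Y f g :
  (forall y, Y y -> f y = g y) -> dual_norm Y f = dual_norm Y g.
Proof.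
move=> fg; rewrite /dual_norm; congr sup.
by apply/seteqP; split=> _ [y [Yy y_le1] <-]; exists y; rewrite ?fg.
Qed.

Lemma dual_norm_sub Y f : Y 0 -> in_dual f -> dual_norm Y f <= dual_norm setT f.
Proof.
move=> Y0 f_dual; apply: dual_norm_le => // y _.
exact: dual_norm_ub f_dual I.
Qed.

Lemma dual_norm_bound Y f y :
  lin_subspace Y -> is_dual_on Y f -> Y y -> `|f y| <= dual_norm Y f * `|y|.
Proof.
move=> [Y0 Ylin] fY Yy.
have [->|y_neq0] := eqVneq y 0; first by rewrite (dual_on0 Y0 fY) !normr0 mulr0.
have y_gt0 : 0 < `|y| by rewrite normr_gt0.
have Yy' := Ylin `|y|^-1 y 0 Yy Y0.
have := dual_norm_ub fY Yy'.
rewrite addr0 normrZ normfV normr_id mulVf ?gt_eqF // lexx => /(_ isT).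
rewrite -[X in f X]addr0 fY.1 // (dual_on0 Y0 fY) addr0 normrM normfV normr_id.
by rewrite ler_pdivrMl // mulrC.
Qed.

Lemma norm_preserving_extension Y f : lin_subspace Y -> is_dual_on Y f ->
  exists g, [/\ in_dual g, (forall y, Y y -> g y = f y) &
                dual_norm setT g = dual_norm Y f].
Proof.
move=> Ysub fY; have [Y0 Ylin] := Ysub.
set N := dual_norm Y f; have N_ge0 : 0 <= N := dual_norm_ge0 Y0 fY.
have p_add (u v : Z) : N * `|u + v| <= N * `|u| + N * `|v|.
  by rewrite -mulrDr ler_wpM2l // ler_normD.
have p_hom t (u : Z) : 0 < t -> N * `|t *: u| = t * (N * `|u|).
  by move=> t_gt0; rewrite normrZ gtr0_norm // mulrCA.
have f_le y : Y y -> f y <= N * `|y|.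
  by move=> Yy; apply: le_trans (ler_norm _) (dual_norm_bound Ysub fY Yy).
have [g [glin gY g_le]] := hahn_banach p_add p_hom Y0 Ylin fY.1 f_le.
have g0 : g 0 = 0.
  by have := glin (-1) 0 0; rewrite scaleN1r oppr0 addr0 mulN1r addNr.
have gN u : g (- u) = - g u.
  by have := glin (-1) u 0; rewrite scaleN1r addr0 g0 addr0 mulN1r.
have g_abs u : `|g u| <= N * `|u|.
  rewrite ler_norml g_le andbT -lerNl -gN.
  by apply: le_trans (g_le _) _; rewrite normrN.
have g_dual : in_dual g.
  by split; [move=> *; exact: glin | exists N => z _; exact: g_abs].
exists g; split => //; apply/eqP; rewrite eq_le; apply/andP; split.
- apply: dual_norm_le => // z _ z_le1; apply: le_trans (g_abs z) _.
  by rewrite -[leRHS]mulr1 ler_wpM2l.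
- by rewrite /N -(eq_dual_norm gY) dual_norm_sub.
Qed.

End DualNorm.

Section PropertySU.
Variables (R : realType) (Z : normedModType R) (Y : set Z).
Variable P : (Z -> R) -> Z -> R.
Hypotheses (Y0 : Y 0)
  (P_lin : forall (a : R) f g, in_dual f -> in_dual g ->
     P (fun z => a * f z + g z) = (fun z => a * P f z + P g z))
  (P_ann : forall f, in_dual f -> annihilator Y (P f))
  (P_id : forall f, annihilator Y f -> P f = f)
  (P_strict : forall f, in_dual f -> P f <> (fun _ => 0) ->
     dual_norm setT (fun z => f z - P f z) < dual_norm setT f).

Lemma norm_preserving_projection0 g : in_dual g ->
  dual_norm setT g <= dual_norm Y g -> P g = (fun _ => 0).
Proof.
move=> g_dual g_le; apply: contrapT => Pg_neq0.
have [Pg_dual Pg_Y] := P_ann g_dual.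
have gPg_dual : in_dual (fun z => g z - P g z).
  under eq_fun do rewrite -mulN1r addrC.
  exact: in_dual_comb.
have := dual_norm_sub Y0 gPg_dual.
rewrite -(@eq_dual_norm _ _ _ g) => [|y Yy]; last by rewrite Pg_Y ?subr0.
have := P_strict g_dual Pg_neq0; lra.
Qed.

Lemma projection0_extension_unique g1 g2 : in_dual g1 -> in_dual g2 ->
  (forall y, Y y -> g1 y = g2 y) ->
  P g1 = (fun _ => 0) -> P g2 = (fun _ => 0) -> g1 = g2.
Proof.
move=> g1_dual g2_dual g12 Pg1 Pg2.
have d_ann : annihilator Y (fun z => -1 * g2 z + g1 z).
  by split; [exact: in_dual_comb | move=> y Yy; rewrite g12 // mulN1r addNr].
have := P_id d_ann; rewrite P_lin // Pg1 Pg2 => d0.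
by apply: funext => z; have /= := congr1 (fun k => k z) d0; lra.
Qed.

Lemma projection0_extension_linear (X : normedModType R) (S T : X -> Z -> R) :
  (forall a x1 x2 y, Y y -> S (a *: x1 + x2) y = a * S x1 y + S x2 y) ->
  (forall x, in_dual (T x)) -> (forall x y, Y y -> T x y = S x y) ->
  (forall x, P (T x) = (fun _ => 0)) ->
  forall a x1 x2, T (a *: x1 + x2) = (fun z => a * T x1 z + T x2 z).
Proof.
move=> S_lin T_dual T_S T_P0 a x1 x2.
apply: projection0_extension_unique => //; first exact: in_dual_comb.
- by move=> y Yy; rewrite !T_S // S_lin.
- by rewrite P_lin // !T_P0; apply: funext => z; rewrite mulr0 addr0.
Qed.

End PropertySU.

Section OperatorNorm.
Variables (R : realType) (X Z : normedModType R) (Y : set Z) (S : X -> Z -> R).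

Lemma dual_isometry_op_norm_le1 : dual_isometry Y S -> op_norm Y S <= 1.
Proof.
move=> S_iso; apply: ge_sup.
  by exists (dual_norm Y (S 0)), 0; rewrite //= normr0.
by move=> _ [x x_le1 <-]; rewrite S_iso.
Qed.

Hypothesis S_op : is_op_to_dual Y S.

Lemma op_to_dual_bound x y :
  Y y -> `|y| <= 1 -> `|S x y| <= op_norm Y S * `|x|.
Proof.
have [S_dual [S_lin [C S_le]]] := S_op; move=> Yy y_le1.
have S0 : S 0 y = 0.
  by have := S_lin (-1) 0 0 y Yy; rewrite scaleN1r oppr0 addr0 mulN1r addNr.
have [->|x_neq0] := eqVneq x 0; first by rewrite S0 !normr0 mulr0.
have x_gt0 : 0 < `|x| by rewrite normr_gt0.
set u := `|x|^-1 *: x.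
have xE : x = `|x| *: u + 0 by rewrite addr0 /u scalerA mulfV ?gt_eqF ?scale1r.
have -> : S x y = `|x| * S u y by rewrite {1}xE S_lin // S0 addr0.
have u_le1 : `|u| <= 1 by rewrite normrZ normfV normr_id mulVf ?gt_eqF.
have Su_le : dual_norm Y (S u) <= op_norm Y S.
  apply: ub_le_sup; last by exists u.
  exists `|C| => _ [v v_le1 <-]; apply: le_trans (S_le v) _.
  apply: le_trans (ler_wpM2r (normr_ge0 v) (ler_norm C)) _.
  by rewrite -[leRHS]mulr1 ler_wpM2l.
rewrite normrM gtr0_norm // mulrC ler_wpM2r //.
exact: le_trans (dual_norm_ub (S_dual u) Yy y_le1) Su_le.
Qed.

End OperatorNorm.

Theorem theorem3p8 (R : realType) (X Z : completeNormedModType R) (Y : set Z)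
  (hYsub : lin_subspace Y) (hYcl : closed Y) (hSU : property_SU Y)
  (S : X -> Z -> R) (hS : is_op_to_dual Y S) (hiso : dual_isometry Y S) :
  exists T : X -> Z -> R,
    [/\ is_op_to_dual setT T,
        op_norm setT T = op_norm Y S,
        (forall x y, Y y -> T x y = S x y) &
        (forall T' : X -> Z -> R, is_op_to_dual setT T' ->
           op_norm setT T' = op_norm Y S ->
           (forall x y, Y y -> T' x y = S x y) -> T' = T)].
Proof.
have [Y0 _] := hYsub; have [P [[_ P_lin] _ P_ann P_id P_strict]] := hSU.
have [S_dual [S_lin _]] := hS.
have ext x : exists g, [/\ in_dual g, forall y, Y y -> g y = S x y &
                          dual_norm setT g = `|x|].
  by rewrite -hiso; exact: norm_preserving_extension hYsub (S_dual x).
have [T /all_and3[T_dual T_S T_norm]] := choice ext.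
have T_P0 x : P (T x) = (fun _ => 0).
  apply: (norm_preserving_projection0 Y0 P_ann P_strict (T_dual x)).
  by rewrite T_norm -hiso (eq_dual_norm (T_S x)).
have T_lin := projection0_extension_linear P_lin P_id S_lin T_dual T_S T_P0.
exists T; split => //.
- split=> //; split; first by move=> a x1 x2 y _; rewrite T_lin.
  by exists 1 => x; rewrite T_norm mul1r.
- by rewrite /op_norm; congr sup; apply: eq_imagel => x _; rewrite T_norm hiso.
move=> T' T'_op T'_norm T'_S; apply: funext => x.
have T'_dual : in_dual (T' x) := T'_op.1 x.
apply: (projection0_extension_unique P_lin P_id T'_dual) (T_P0 x) => //.
  by move=> y Yy; rewrite T'_S ?T_S.
apply: (norm_preserving_projection0 Y0 P_ann P_strict T'_dual).
rewrite (eq_dual_norm (T'_S x)) hiso; apply: dual_norm_le => // z _ z_le1.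
apply: le_trans (op_to_dual_bound T'_op x I z_le1) _.
by rewrite T'_norm ler_piMl // dual_isometry_op_norm_le1.
Qed.
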